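(* Let $\mathfrak g$ be a Kac--Moody algebra over a field $F$ of characteristic $0$ of simply laced affine type (i.e. with diagram $A_n^+$ for $n\ge2$, $D_n^+$ for $n\ge4$, $E_6^+$, $E_7^+$ or $E_8^+$), let $\mathfrak k$ be its maximal compact subalgebra and let $\rho$ be a generalized spin representation of $\mathfrak k$. Let $\delta$ be the fundamental positive imaginary root (null root) of $\mathfrak g$ and $\mathfrak k_\delta:=\{x+\omega(x):x\in\mathfrak g_\delta\}$. Then $\ker\rho$ contains the ideal of $\mathfrak k$ generated by $\mathfrak k_\delta$.
   Context: $\mathfrak g$ is $Q$-graded, $Q=\bigoplus_i\mathbb Z v_i$, with $\deg e_i=v_i$, $\deg f_i=-v_i$, $\deg h_i=0$; $\mathfrak g_\alpha$ is the component of degree $\alpha$. For affine type, $\delta=\sum_i a_iv_i$ is the unique positive imaginary root with the standard marks $a_i$ (the smallest positive $\mathbb Z$-combination of simple roots annihilated by the Cartan matrix); e.g. for $A_n^+$ (a cycle on $n+1$ vertices) all $a_i=1$. $\omega$ is the Cartan--Chevalley involution ($e_i\mapsto-f_i$, $f_i\mapsto-e_i$, $h_i\mapsto-h_i$), $\mathfrak k$ its fixed points, generated by $X_i=e_i-f_i$ with relations $[X_i,[X_i,X_j]]=-X_j$ for adjacent and $[X_i,X_j]=0$ for non-adjacent $i\neq j$. With $L=F(I)$, $I^2=-1$, a generalized spin representation is a Lie algebra homomorphism $\rho:\mathfrak k\to\operatorname{End}(L^s)$ with $\rho(X_i)^2=-\tfrac14\mathrm{id}_s$ for all $i$. *)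

From HB Require Import structures.
From mathcomp Require Import all_boot all_order all_algebra all_field.
Set Implicit Arguments. Unset Strict Implicit. Unset Printing Implicit Defensive.
Import Order.TTheory GRing.Theory Num.Theory.
Local Open Scope ring_scope.

Section KM.
Variable F : fieldType.

Definition is_lie (G : lmodType F) (br : G -> G -> G) : Prop :=
  [/\ (forall (a : F) x y z, br (a *: x + y) z = a *: br x z + br y z),
      (forall (a : F) x y z, br z (a *: x + y) = a *: br z x + br z y),
      (forall x, br x x = 0) &
      (forall x y z, br x (br y z) + br y (br z x) + br z (br x y) = 0)].

Definition is_lie_hom (G M : lmodType F) (brG : G -> G -> G) (brM : M -> M -> M)
  (phi : G -> M) : Prop :=
  (forall (a : F) x y, phi (a *: x + y) = a *: phi x + phi y) /\
  (forall x y, phi (brG x y) = brM (phi x) (phi y)).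

Variable m : nat.

Definition serre_rel (A : 'M[int]_m) (G : lmodType F) (br : G -> G -> G)
  (e f h : 'I_m -> G) : Prop :=
  [/\ (forall i j, br (h i) (h j) = 0),
      (forall i j, br (h i) (e j) = (A i j)%:~R *: e j),
      (forall i j, br (h i) (f j) = - ((A i j)%:~R *: f j)),
      (forall i j, br (e i) (f j) = if i == j then h i else 0) &
      (forall i j, i != j -> iter `|1 - A i j|%N (br (e i)) (e j) = 0) /\
      (forall i j, i != j -> iter `|1 - A i j|%N (br (f i)) (f j) = 0)].

(* (G, br, e, f, h) is the Kac--Moody algebra g(A): the Lie algebra presented
   by generators e_i, f_i, h_i and the Chevalley--Serre relations, i.e. the
   initial object among Lie algebras with such elements. *)
Definition is_KM_algebra (A : 'M[int]_m) (G : lmodType F) (br : G -> G -> G)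
  (e f h : 'I_m -> G) : Prop :=
  [/\ is_lie br, serre_rel A br e f h &
      forall (M : lmodType F) (brM : M -> M -> M) (e' f' h' : 'I_m -> M),
        is_lie brM -> serre_rel A brM e' f' h' ->
        (exists phi : G -> M, is_lie_hom br brM phi /\
           forall i, [/\ phi (e i) = e' i, phi (f i) = f' i & phi (h i) = h' i])
        /\ (forall phi1 phi2 : G -> M,
              is_lie_hom br brM phi1 -> is_lie_hom br brM phi2 ->
              (forall i, [/\ phi1 (e i) = e' i, phi1 (f i) = f' i & phi1 (h i) = h' i]) ->
              (forall i, [/\ phi2 (e i) = e' i, phi2 (f i) = f' i & phi2 (h i) = h' i]) ->
              forall x, phi1 x = phi2 x)].

Definition simple_root (i : 'I_m) : 'rV[int]_m := delta_mx 0 i.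

(* homogeneous G (br) e f h alpha x : x lies in the root space g_alpha for the
   Q-grading deg e_i = v_i, deg f_i = -v_i, deg h_i = 0 (g_alpha is the span of
   the bracket monomials in the generators of degree alpha). *)
Inductive homogeneous (G : lmodType F) (br : G -> G -> G) (e f h : 'I_m -> G)
  : 'rV[int]_m -> G -> Prop :=
| homog0 alpha : homogeneous br e f h alpha 0
| homogD alpha x y : homogeneous br e f h alpha x -> homogeneous br e f h alpha y ->
    homogeneous br e f h alpha (x + y)
| homogZ alpha (c : F) x : homogeneous br e f h alpha x ->
    homogeneous br e f h alpha (c *: x)
| homog_e i : homogeneous br e f h (simple_root i) (e i)
| homog_f i : homogeneous br e f h (- simple_root i) (f i)
| homog_h i : homogeneous br e f h 0 (h i)
| homog_br alpha beta x y : homogeneous br e f h alpha x ->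
    homogeneous br e f h beta y -> homogeneous br e f h (alpha + beta) (br x y).

(* Ideal of the subalgebra k = {x | omega x = x} generated by the set S (S ⊆ k):
   the smallest subspace containing S and stable under [y, _] for y in k. *)
Inductive in_k_ideal (G : lmodType F) (br : G -> G -> G) (omega : G -> G)
  (S : G -> Prop) : G -> Prop :=
| kid_gen x : S x -> in_k_ideal br omega S x
| kid0 : in_k_ideal br omega S 0
| kidD x y : in_k_ideal br omega S x -> in_k_ideal br omega S y ->
    in_k_ideal br omega S (x + y)
| kidZ (c : F) x : in_k_ideal br omega S x -> in_k_ideal br omega S (c *: x)
| kid_br y x : omega y = y -> in_k_ideal br omega S x ->
    in_k_ideal br omega S (br y x).

End KM.

Definition simply_laced (m : nat) (A : 'M[int]_m) : Prop :=
  forall i j, A i j = A j i /\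
    (if i == j then A i j = 2%:Z else A i j = 0 \/ A i j = -1).

Definition indecomposable (m : nat) (A : 'M[int]_m) : Prop :=
  forall P : {set 'I_m}, P != set0 -> P != setT ->
    exists i j, [/\ i \in P, j \notin P & A i j != 0].

Definition positive_null (m : nat) (A : 'M[int]_m) (u : 'I_m -> nat) : Prop :=
  (forall i, (0 < u i)%N) /\
  (forall i, \sum_(j < m) A i j * (u j)%:Z = 0).

(* Affine type (Kac, Thm 4.3): indecomposable with a positive null vector. *)
Definition affine_type (m : nat) (A : 'M[int]_m) : Prop :=
  indecomposable A /\ exists u, positive_null A u.

(* The marks a_i of delta = sum a_i v_i : the smallest positive integral null
   vector of A. *)
Definition null_root_marks (m : nat) (A : 'M[int]_m) (a : 'I_m -> nat) : Prop :=
  positive_null A a /\ forall u, positive_null A u -> forall i, (a i <= u i)%N.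

Definition null_root (m : nat) (a : 'I_m -> nat) : 'rV[int]_m :=
  \row_i (a i)%:Z.

(* Put X_i = e_i - f_i and gam_i = rho(X_i), so that gam_i^2 = -1/4.  As A is
   simply laced, the Serre relations of k force
       gam_j gam_i = (-1)^(a_ji) gam_i gam_j.
   For x in n^+_alpha put M = rho(x + omega x).  Induction on the height of
   alpha, based on the identity
       [e_i, x] + omega [e_i, x] = [X_i, x + omega x] + ([f_i, x] + omega [f_i, x])
   and on [f_i, x] lying in n^+_(alpha - v_i) + h, shows that
   gam_j M = (-1)^(v_j, alpha) M gam_j and that M = 0 whenever 4 divides
   (alpha, alpha).  By the triangular decomposition
   g_alpha = n^+_alpha + n^-_alpha + h_alpha, with omega exchanging n^- and n^+,
   rho then vanishes on k_alpha for every such alpha; in particular on k_delta,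
   as (delta, delta) = 0.  Finally the kernel of the Lie homomorphism rho is an
   ideal of k. *)

From HB Require Import structures.
From mathcomp Require Import all_boot all_order all_algebra all_field.
From mathcomp Require Import zify.
Import Order.TTheory GRing.Theory Num.Theory.
Local Open Scope ring_scope.
Set Implicit Arguments. Unset Strict Implicit. Unset Printing Implicit Defensive.

Section LieCalculus.
Variables (F : fieldType) (G : lmodType F) (br : G -> G -> G).
Hypothesis lieG : is_lie br.

Lemma brDl x y z : br (x + y) z = br x z + br y z.
Proof. by have [lin _ _ _] := lieG; rewrite -(scale1r x) lin !scale1r. Qed.
Lemma brDr x y z : br z (x + y) = br z x + br z y.
Proof. by have [_ lin _ _] := lieG; rewrite -(scale1r x) lin !scale1r. Qed.
Lemma br0l z : br 0 z = 0.
Proof. by apply: (addrI (br 0 z)); rewrite -brDl !addr0. Qed.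
Lemma br0r z : br z 0 = 0.
Proof. by apply: (addrI (br z 0)); rewrite -brDr !addr0. Qed.
Lemma brZl c x z : br (c *: x) z = c *: br x z.
Proof. by have [lin _ _ _] := lieG; rewrite -(addr0 (c *: x)) lin br0l addr0. Qed.
Lemma brZr c x z : br z (c *: x) = c *: br z x.
Proof. by have [_ lin _ _] := lieG; rewrite -(addr0 (c *: x)) lin br0r addr0. Qed.
Lemma brNl x z : br (- x) z = - br x z.
Proof. by rewrite -scaleN1r brZl scaleN1r. Qed.
Lemma brNr x z : br z (- x) = - br z x.
Proof. by rewrite -scaleN1r brZr scaleN1r. Qed.
Lemma brBl x y z : br (x - y) z = br x z - br y z.
Proof. by rewrite brDl brNl. Qed.
Lemma brBr x y z : br z (x - y) = br z x - br z y.
Proof. by rewrite brDr brNr. Qed.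

Lemma brC x y : br x y = - br y x.
Proof.
have [_ _ alt _] := lieG; have := alt (x + y).
by rewrite brDl !brDr !alt add0r addr0 => /eqP; rewrite addr_eq0 => /eqP.
Qed.

(* The Jacobi identity in the form "ad x is a derivation". *)
Lemma jacobi x y z : br x (br y z) = br (br x y) z + br y (br x z).
Proof.
have [_ _ _ jac] := lieG; move: (jac x y z).
rewrite (brC z x) brNr (brC z (br x y)) => /eqP.
by rewrite -addrA -opprD subr_eq0 => /eqP ->; rewrite addrC.
Qed.
End LieCalculus.

Section LieHom.
Variables (F : fieldType) (G M : lmodType F).
Variables (brG : G -> G -> G) (brM : M -> M -> M) (phi : G -> M).
Hypothesis phi_hom : is_lie_hom brG brM phi.

Lemma hom_br x y : phi (brG x y) = brM (phi x) (phi y).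
Proof. by case: phi_hom. Qed.
Lemma hom0 : phi 0 = 0.
Proof.
have [lin _] := phi_hom; apply: (addrI (phi 0)).
by rewrite -{1}(scale1r (phi 0)) -lin scale1r !addr0.
Qed.
Lemma homD x y : phi (x + y) = phi x + phi y.
Proof. by have [lin _] := phi_hom; rewrite -(scale1r x) lin !scale1r. Qed.
Lemma homZ c x : phi (c *: x) = c *: phi x.
Proof. by have [lin _] := phi_hom; rewrite -(addr0 (c *: x)) lin hom0 addr0. Qed.
Lemma homN x : phi (- x) = - phi x.
Proof. by rewrite -scaleN1r homZ scaleN1r. Qed.
Lemma homB x y : phi (x - y) = phi x - phi y.
Proof. by rewrite homD homN. Qed.
End LieHom.

(* A Lie endomorphism of g(A) acting on the generators like the Chevalley
   involution is an involution, by the uniqueness part of the universal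
   property of g(A). *)
Lemma chevalley_involutive (F : fieldType) (m : nat) (A : 'M[int]_m)
    (G : lmodType F) (br : G -> G -> G) (e f h : 'I_m -> G) (omega : G -> G) :
  is_KM_algebra A br e f h -> is_lie_hom br br omega ->
  (forall i, [/\ omega (e i) = - f i, omega (f i) = - e i & omega (h i) = - h i]) ->
  forall x, omega (omega x) = x.
Proof.
move=> [lieG serreG univ] om_hom om_gen.
have [_ uniq] := univ G br e f h lieG serreG.
have om2_hom : is_lie_hom br br (fun x => omega (omega x)).
  by split=> [c u v|u v]; rewrite ?(homD om_hom) ?(homZ om_hom) ?(hom_br om_hom).
apply: (uniq _ id om2_hom) => // i.
by have [-> -> ->] := om_gen i; rewrite !(homN om_hom); have [-> -> ->] := om_gen i;
  rewrite !opprK.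
Qed.

Local Notation sr := simple_root.

(* Applied to the family f (with degrees negated) it describes n^-. *)
Inductive nplus (F : fieldType) (m : nat) (G : lmodType F) (br : G -> G -> G)
    (e : 'I_m -> G) : 'rV[int]_m -> G -> Prop :=
| nplus_gen i : nplus br e (sr i) (e i)
| nplus_br i a x : nplus br e a x -> nplus br e (sr i + a) (br (e i) x)
| nplus0 a : nplus br e a 0
| nplusD a x y : nplus br e a x -> nplus br e a y -> nplus br e a (x + y)
| nplusZ a (c : F) x : nplus br e a x -> nplus br e a (c *: x).

Inductive cartan (F : fieldType) (m : nat) (G : lmodType F) (h : 'I_m -> G) : G -> Prop :=
| cartan_gen i : cartan h (h i)
| cartan0 : cartan h 0
| cartanD x y : cartan h x -> cartan h y -> cartan h (x + y)
| cartanZ (c : F) x : cartan h x -> cartan h (c *: x).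

Section PositivePart.
Variables (F : fieldType) (m : nat) (A : 'M[int]_m) (G : lmodType F).
Variables (br : G -> G -> G) (e f h : 'I_m -> G).
Hypothesis lieG : is_lie br.
Hypothesis serreG : serre_rel A br e f h.

Lemma nplusN a x : nplus br e a x -> nplus br e a (- x).
Proof. by move=> Hx; rewrite -scaleN1r; apply: nplusZ. Qed.
Lemma nplusB a x y : nplus br e a x -> nplus br e a y -> nplus br e a (x - y).
Proof. by move=> Hx Hy; apply: nplusD => //; apply: nplusN. Qed.
Lemma cartanN x : cartan h x -> cartan h (- x).
Proof. by move=> Hx; rewrite -scaleN1r; apply: cartanZ. Qed.

Lemma br_hh i j : br (h i) (h j) = 0. Proof. by case: serreG. Qed.
Lemma br_he i j : br (h i) (e j) = (A i j)%:~R *: e j. Proof. by case: serreG. Qed.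
Lemma br_hf i j : br (h i) (f j) = - ((A i j)%:~R *: f j). Proof. by case: serreG. Qed.
Lemma br_ef i j : br (e i) (f j) = if i == j then h i else 0. Proof. by case: serreG. Qed.

Lemma br_nplus a x b y : nplus br e a x -> nplus br e b y -> nplus br e (a + b) (br x y).
Proof.
move=> Hx; elim: Hx b y => {a x} [i|i a x _ IHx|a|a x1 x2 _ IH1 _ IH2|a c x _ IHx] b y Hy.
- exact: nplus_br.
- have -> : br (br (e i) x) y = br (e i) (br x y) - br x (br (e i) y).
    by rewrite (jacobi lieG (e i)) addrK.
  apply: nplusB; first by rewrite -addrA; apply/nplus_br/IHx.
  by rewrite (addrC (sr i)) -addrA; apply/IHx/nplus_br.
- by rewrite (br0l lieG); apply: nplus0.
- by rewrite (brDl lieG); apply: nplusD; [apply: IH1 | apply: IH2].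
- by rewrite (brZl lieG); apply/nplusZ/IHx.
Qed.

Lemma br_cartan_nplus z a x : cartan h z -> nplus br e a x -> nplus br e a (br z x).
Proof.
move=> Hz Hx; elim: Hz => [j||z1 z2 _ IH1 _ IH2|c z1 _ IHz].
- elim: Hx => {a x} [i|i a x Hx IHx|a|a x y _ IH1 _ IH2|a c x _ IHx].
  + by rewrite br_he; apply/nplusZ/nplus_gen.
  + rewrite (jacobi lieG) br_he (brZl lieG).
    by apply: nplusD; [apply: nplusZ; apply: nplus_br | apply: nplus_br].
  + by rewrite (br0r lieG); apply: nplus0.
  + by rewrite (brDr lieG); apply: nplusD.
  + by rewrite (brZr lieG); apply: nplusZ.
- by rewrite (br0l lieG); apply: nplus0.
- by rewrite (brDl lieG); apply: nplusD.
- by rewrite (brZl lieG); apply: nplusZ.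
Qed.

Lemma br_cartan_cartan z w : cartan h z -> cartan h w -> br z w = 0.
Proof.
move=> Hz Hw; elim: Hz => [j||z1 z2 _ IH1 _ IH2|c z1 _ IHz].
- elim: Hw => [i||w1 w2 _ IH1 _ IH2|c w1 _ IHw].
  + exact: br_hh.
  + exact: br0r.
  + by rewrite (brDr lieG) IH1 IH2 addr0.
  + by rewrite (brZr lieG) IHw scaler0.
- exact: br0l.
- by rewrite (brDl lieG) IH1 IH2 addr0.
- by rewrite (brZl lieG) IHz scaler0.
Qed.

Definition cartan_part (a : 'rV[int]_m) z := (a = 0 /\ cartan h z) \/ z = 0.

Lemma cartan_part0 a : cartan_part a 0. Proof. by right. Qed.
Lemma cartan_partD a x y : cartan_part a x -> cartan_part a y -> cartan_part a (x + y).
Proof.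
case=> [[a0 Hx]|->]; last by rewrite add0r.
by case=> [[_ Hy]|->]; [left; split=> //; apply: cartanD | rewrite addr0; left].
Qed.
Lemma cartan_partZ a c x : cartan_part a x -> cartan_part a (c *: x).
Proof.
by case=> [[a0 Hx]|->]; [left; split=> //; apply: cartanZ | right; rewrite scaler0].
Qed.

Lemma br_e_cartan_part i a z : cartan_part a z -> nplus br e (sr i + a) (br (e i) z).
Proof.
case=> [[-> Hz]|->]; last by rewrite (br0r lieG); apply: nplus0.
by rewrite addr0 (brC lieG); apply/nplusN/br_cartan_nplus/nplus_gen.
Qed.

Definition borel a z := exists z1 z2, [/\ z = z1 + z2, nplus br e a z1 & cartan_part a z2].

Lemma borel0 a : borel a 0.
Proof. by exists 0, 0; rewrite addr0; split; [|apply: nplus0|apply: cartan_part0]. Qed.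
Lemma borel_nplus a x : nplus br e a x -> borel a x.
Proof. by exists x, 0; rewrite addr0; split=> //; apply: cartan_part0. Qed.
Lemma borelD a x y : borel a x -> borel a y -> borel a (x + y).
Proof.
move=> [x1 [x2 [-> Hx1 Hx2]]] [y1 [y2 [-> Hy1 Hy2]]]; exists (x1 + y1), (x2 + y2).
by split; [rewrite addrACA | apply: nplusD | apply: cartan_partD].
Qed.
Lemma borelZ a c x : borel a x -> borel a (c *: x).
Proof.
move=> [x1 [x2 [-> Hx1 Hx2]]]; exists (c *: x1), (c *: x2).
by split; [rewrite scalerDr | apply: nplusZ | apply: cartan_partZ].
Qed.

Lemma br_f_nplus j a x : nplus br e a x -> borel (a - sr j) (br (f j) x).
Proof.
elim=> {a x} [i|i a x Hx IHx|a|a x1 x2 _ IH1 _ IH2|a c x _ IHx].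
- rewrite (brC lieG) br_ef; case: eqP => [<-|_]; last by rewrite oppr0; apply: borel0.
  exists 0, (- h i); rewrite add0r subrr; split=> //; first exact: nplus0.
  by left; split=> //; apply/cartanN/cartan_gen.
- rewrite (jacobi lieG) (brC lieG (f j)) br_ef; apply: borelD.
  + case: eqP => [<-|_]; last by rewrite oppr0 (br0l lieG); apply: borel0.
    rewrite (addrC (sr i)) addrK (brNl lieG).
    by apply/borel_nplus/nplusN/(br_cartan_nplus (cartan_gen h i)).
  + apply: borel_nplus; have [z1 [z2 [-> Hz1 Hz2]]] := IHx.
    rewrite (brDr lieG) -addrA; apply: nplusD; first exact: nplus_br.
    exact: br_e_cartan_part.
- by rewrite (br0r lieG); apply: borel0.
- by rewrite (brDr lieG); apply: borelD.
- by rewrite (brZr lieG); apply: borelZ.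
Qed.
End PositivePart.

(* The Chevalley-Serre relations are invariant under e <-> f, h <-> -h; this
   symmetry transports the results on n^+ to n^-. *)
Lemma serre_rel_dual (F : fieldType) (m : nat) (A : 'M[int]_m) (G : lmodType F)
    (br : G -> G -> G) (e f h : 'I_m -> G) :
  is_lie br -> serre_rel A br e f h -> serre_rel A br f e (fun i => - h i).
Proof.
move=> lieG [hh he hf ef [se sf]]; split=> // i j.
- by rewrite (brNl lieG) (brNr lieG) hh !oppr0.
- by rewrite (brNl lieG) hf opprK.
- by rewrite (brNl lieG) he.
- by rewrite (brC lieG) ef eq_sym; case: eqP => [->|]; rewrite ?oppr0.
Qed.

Lemma cartan_dual (F : fieldType) (m : nat) (G : lmodType F) (h : 'I_m -> G) z :
  cartan h z -> cartan (fun i => - h i) z.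
Proof.
elim=> [i||x y _ IHx _ IHy|c x _ IHx].
- by rewrite -[h i]opprK -scaleN1r; apply/cartanZ/(cartan_gen (fun i => - h i)).
- exact: cartan0.
- exact: cartanD.
- exact: cartanZ.
Qed.

Section Triangular.
Variables (F : fieldType) (m : nat) (A : 'M[int]_m) (G : lmodType F).
Variables (br : G -> G -> G) (e f h : 'I_m -> G).
Hypothesis lieG : is_lie br.
Hypothesis serreG : serre_rel A br e f h.

Let serre_dual := serre_rel_dual lieG serreG.

Definition triangular a z := exists z1 z2 z3,
  [/\ z = z1 + z2 + z3, nplus br e a z1, nplus br f (- a) z2 & cartan_part h a z3].

Lemma triangular0 a : triangular a 0.
Proof.
by exists 0, 0, 0; rewrite !addr0; split; [| exact: nplus0 | exact: nplus0 | right].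
Qed.
Lemma triangularD a x y : triangular a x -> triangular a y -> triangular a (x + y).
Proof.
move=> [x1 [x2 [x3 [-> Hx1 Hx2 Hx3]]]] [y1 [y2 [y3 [-> Hy1 Hy2 Hy3]]]].
exists (x1 + y1), (x2 + y2), (x3 + y3); rewrite addrACA (addrACA x1).
by split; [| apply: nplusD | apply: nplusD | apply: cartan_partD].
Qed.
Lemma triangularZ a c x : triangular a x -> triangular a (c *: x).
Proof.
move=> [x1 [x2 [x3 [-> Hx1 Hx2 Hx3]]]]; exists (c *: x1), (c *: x2), (c *: x3).
by rewrite !scalerDr; split; [| apply: nplusZ | apply: nplusZ | apply: cartan_partZ].
Qed.
Lemma triangularN a x : triangular a x -> triangular a (- x).
Proof. by move=> Hx; rewrite -scaleN1r; apply: triangularZ. Qed.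

Lemma triangular_nplus a x : nplus br e a x -> triangular a x.
Proof. by exists x, 0, 0; rewrite !addr0; split; [| | exact: nplus0 | right]. Qed.
Lemma triangular_nminus a x : nplus br f (- a) x -> triangular a x.
Proof.
by exists 0, x, 0; rewrite addr0 add0r; split; [| exact: nplus0 | | right].
Qed.
Lemma triangular_cartan_part a x : cartan_part h a x -> triangular a x.
Proof. by exists 0, 0, x; rewrite !add0r; split; [| exact: nplus0 | exact: nplus0 |]. Qed.
Lemma triangular_borel a x : borel br e h a x -> triangular a x.
Proof.
move=> [x1 [x2 [-> Hx1 Hx2]]].
by apply: triangularD; [apply: triangular_nplus | apply: triangular_cartan_part].
Qed.

Lemma br_cartan_nminus z c y : cartan h z -> nplus br f c y -> nplus br f c (br z y).
Proof. by move=> Hz; apply: (br_cartan_nplus lieG serre_dual (cartan_dual Hz)). Qed.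

Lemma br_f_triangular j a z : triangular a z -> triangular (- sr j + a) (br (f j) z).
Proof.
move=> [z1 [z2 [z3 [-> Hz1 Hz2 Hz3]]]]; rewrite !(brDr lieG).
apply: triangularD; first apply: triangularD.
- by apply: triangular_borel; rewrite addrC; apply: (br_f_nplus lieG serreG).
- by apply: triangular_nminus; rewrite opprD opprK; apply: nplus_br.
- case: Hz3 => [[-> Hz3]|->]; last by rewrite (br0r lieG); apply: triangular0.
  apply: triangular_nminus; rewrite addr0 opprK (brC lieG).
  by apply/nplusN/br_cartan_nminus/nplus_gen.
Qed.

Lemma br_nminus_nplus c y a x :
  nplus br f c y -> nplus br e a x -> triangular (a - c) (br y x).
Proof.
move=> Hy; elim: Hy a x => {c y} [j|j c y Hy IHy|c|c y1 y2 _ IH1 _ IH2|c k y _ IHy] a x Hx.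
- exact/triangular_borel/(br_f_nplus lieG serreG).
- have -> : br (br (f j) y) x = br (f j) (br y x) - br y (br (f j) x).
    by rewrite (jacobi lieG (f j)) addrK.
  apply: triangularD; first by rewrite opprD addrCA; apply/br_f_triangular/IHy.
  apply: triangularN; have [z1 [z2 [-> Hz1 Hz2]]] := br_f_nplus lieG serreG j Hx.
  rewrite (brDr lieG); apply: triangularD.
    by rewrite opprD addrA; apply: IHy.
  case: Hz2 => [[a_j Hz2]|->]; last by rewrite (br0r lieG); apply: triangular0.
  rewrite opprD addrA a_j add0r; apply: triangular_nminus; rewrite opprK (brC lieG).
  exact/nplusN/br_cartan_nminus.
- by rewrite (br0l lieG); apply: triangular0.
- by rewrite (brDl lieG); apply: triangularD; [apply: IH1 | apply: IH2].
- by rewrite (brZl lieG); apply/triangularZ/IHy.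
Qed.

Lemma br_nplus_triangular a x b y :
  nplus br e a x -> triangular b y -> triangular (a + b) (br x y).
Proof.
move=> Hx [y1 [y2 [y3 [-> Hy1 Hy2 Hy3]]]]; rewrite !(brDr lieG).
apply: triangularD; first apply: triangularD.
- exact/triangular_nplus/(br_nplus lieG).
- by rewrite (brC lieG) -[b]opprK; apply/triangularN/br_nminus_nplus.
- case: Hy3 => [[-> Hy3]|->]; last by rewrite (br0r lieG); apply: triangular0.
  rewrite addr0 (brC lieG); apply/triangular_nplus/nplusN.
  exact: (br_cartan_nplus lieG serreG).
Qed.

Lemma br_nminus_triangular a x b y :
  nplus br f (- a) x -> triangular b y -> triangular (a + b) (br x y).
Proof.
move=> Hx [y1 [y2 [y3 [-> Hy1 Hy2 Hy3]]]]; rewrite !(brDr lieG).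
apply: triangularD; first apply: triangularD.
- by rewrite addrC -[a]opprK; apply: br_nminus_nplus.
- by apply: triangular_nminus; rewrite opprD; apply: (br_nplus lieG).
- case: Hy3 => [[-> Hy3]|->]; last by rewrite (br0r lieG); apply: triangular0.
  rewrite addr0 (brC lieG); apply/triangular_nminus/nplusN.
  exact: br_cartan_nminus.
Qed.

Lemma br_cartan_triangular a x b y :
  cartan_part h a x -> triangular b y -> triangular (a + b) (br x y).
Proof.
case=> [[-> Hx]|->]; last by rewrite (br0l lieG) => _; apply: triangular0.
move=> [y1 [y2 [y3 [-> Hy1 Hy2 Hy3]]]]; rewrite add0r !(brDr lieG).
apply: triangularD; first apply: triangularD.
- exact/triangular_nplus/(br_cartan_nplus lieG serreG).
- exact/triangular_nminus/br_cartan_nminus.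
- case: Hy3 => [[_ Hy3]|->]; last by rewrite (br0r lieG); apply: triangular0.
  by rewrite (br_cartan_cartan lieG serreG Hx Hy3); apply: triangular0.
Qed.

Lemma br_triangular a x b y :
  triangular a x -> triangular b y -> triangular (a + b) (br x y).
Proof.
move=> [x1 [x2 [x3 [-> Hx1 Hx2 Hx3]]]] Hy; rewrite !(brDl lieG).
apply: triangularD; first apply: triangularD.
- exact: br_nplus_triangular.
- exact: br_nminus_triangular.
- exact: br_cartan_triangular.
Qed.

Lemma homogeneous_triangular a x : homogeneous br e f h a x -> triangular a x.
Proof.
elim=> {a x} [a|a x y _ IHx _ IHy|a c x _ IHx|i|i|i|a b x y _ IHx _ IHy].
- exact: triangular0.
- exact: triangularD.
- exact: triangularZ.
- exact/triangular_nplus/nplus_gen.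
- by apply: triangular_nminus; rewrite opprK; apply: nplus_gen.
- by apply: triangular_cartan_part; left; split=> //; apply: cartan_gen.
- exact: br_triangular.
Qed.
End Triangular.

Section CartanForm.
Variables (m : nat) (A : 'M[int]_m).
Hypothesis slA : simply_laced A.

Definition cform (x y : 'rV[int]_m) : int := \sum_i \sum_j x 0 i * A i j * y 0 j.
Definition qnorm (x : 'rV[int]_m) : int := cform x x.
Definition height (x : 'rV[int]_m) : int := \sum_i x 0 i.

Lemma cformDl x y z : cform (x + y) z = cform x z + cform y z.
Proof.
rewrite /cform -big_split; apply: eq_bigr => i _; rewrite -big_split.
by apply: eq_bigr => j _; rewrite mxE !mulrDl.
Qed.
Lemma cformDr x y z : cform z (x + y) = cform z x + cform z y.
Proof.
rewrite /cform -big_split; apply: eq_bigr => i _; rewrite -big_split.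
by apply: eq_bigr => j _; rewrite mxE !mulrDr.
Qed.
Lemma cformNl x z : cform (- x) z = - cform x z.
Proof.
rewrite /cform -sumrN; apply: eq_bigr => i _; rewrite -sumrN.
by apply: eq_bigr => j _; rewrite mxE !mulNr.
Qed.
Lemma cformNr x z : cform z (- x) = - cform z x.
Proof.
rewrite /cform -sumrN; apply: eq_bigr => i _; rewrite -sumrN.
by apply: eq_bigr => j _; rewrite mxE !mulrN.
Qed.

Lemma cform_srl i y : cform (simple_root i) y = \sum_j A i j * y 0 j.
Proof.
rewrite /cform (bigD1 i) //= [X in _ + X]big1 ?addr0 => [|k /negPf nki].
  by apply: eq_bigr => j _; rewrite mxE !eqxx mul1r.
by apply: big1 => j _; rewrite mxE nki andbF !mul0r.
Qed.

Lemma cform_sr i j : cform (simple_root i) (simple_root j) = A i j.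
Proof.
rewrite cform_srl (bigD1 j) //= [X in _ + X]big1 ?addr0 => [|k /negPf nkj].
  by rewrite mxE !eqxx mulr1.
by rewrite mxE nkj andbF mulr0.
Qed.

Lemma cform_srr j x : cform x (simple_root j) = cform (simple_root j) x.
Proof.
rewrite cform_srl; apply: eq_bigr => k _.
rewrite (bigD1 j) //= [X in _ + X]big1 ?addr0 => [|l /negPf nlj].
  by rewrite mxE !eqxx mulr1 mulrC; have [-> _] := slA j k.
by rewrite mxE nlj andbF mulr0.
Qed.

Lemma diag_cartan i : A i i = 2.
Proof. by have [_] := slA i i; rewrite eqxx. Qed.

Lemma qnorm_sr i : qnorm (simple_root i) = 2.
Proof. by rewrite /qnorm cform_sr diag_cartan. Qed.
Lemma qnormN x : qnorm (- x) = qnorm x.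
Proof. by rewrite /qnorm cformNl cformNr opprK. Qed.

Lemma qnorm_add_sr i b :
  qnorm (simple_root i + b) = qnorm b + 2 * cform (simple_root i) b + 2.
Proof.
rewrite /qnorm !cformDl !cformDr cform_srr cform_sr diag_cartan.
by rewrite -/(qnorm b); lia.
Qed.
Lemma qnorm_sub_sr i b :
  qnorm (b - simple_root i) = qnorm b - 2 * cform (simple_root i) b + 2.
Proof.
rewrite /qnorm !cformDl !cformDr !cformNl !cformNr cform_srr cform_sr diag_cartan.
by rewrite -/(qnorm b); lia.
Qed.

Lemma heightD x y : height (x + y) = height x + height y.
Proof. by rewrite /height -big_split; apply: eq_bigr => i _; rewrite mxE. Qed.
Lemma heightN x : height (- x) = - height x.
Proof. by rewrite /height -sumrN; apply: eq_bigr => i _; rewrite mxE. Qed.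
Lemma height_sr i : height (simple_root i) = 1.
Proof.
rewrite /height (bigD1 i) //= [X in _ + X]big1 ?addr0 => [|k /negPf nki].
  by rewrite mxE !eqxx.
by rewrite mxE nki andbF.
Qed.
End CartanForm.

Lemma qnorm_null (m : nat) (A : 'M[int]_m) (a : 'I_m -> nat) :
  positive_null A a -> qnorm A (null_root a) = 0.
Proof.
case=> _ null; rewrite /qnorm /cform; apply: big1 => i _.
under eq_bigr => j _ do rewrite !mxE -mulrA.
by rewrite -big_distrr /= null mulr0.
Qed.

(* In any ring: if u^2 = k is central with 4k = -1 (as for rho(X_i), whose
   square is -1/4) and [u, [u, v]] = -v, then u and v anticommute. *)
Lemma anticommute_of_spin (R : pzRingType) (u v k : R) :
  (forall y, k * y = y * k) -> u * u = k -> k *+ 4 = -1 ->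
  u * (u * v - v * u) - (u * v - v * u) * u = - v -> u * v = - (v * u).
Proof.
move=> kC uu k4 H.
have k_reg (y : R) : k * y = 0 -> y = 0.
  move=> ky0; have : (k *+ 4) * y = - y by rewrite k4 mulN1r.
  by rewrite mulrnAl ky0 mul0rn => /eqP; rewrite eq_sym oppr_eq0 => /eqP.
have four_reg (y : R) : y *+ 4 = 0 -> y = 0.
  move=> y40; have : (k *+ 4) * y = - y by rewrite k4 mulN1r.
  by rewrite mulrnAl -mulrnAr y40 mulr0 => /eqP; rewrite eq_sym oppr_eq0 => /eqP.
set a := u * v * u; set b := k * v.
have uuv : u * (u * v) = b by rewrite mulrA uu.
have uvu : u * (v * u) = a by rewrite mulrA.
have vuu : v * u * u = b by rewrite -mulrA uu -kC.
move: H; rewrite mulrBr mulrBl uuv uvu vuu -/a opprB => H.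
(* H says 2b - 2a = -v = 4b, hence a = -b, i.e. uvu = -kv. *)
have b4 : b *+ 4 = - v by rewrite /b -mulrnAl k4 mulN1r.
have a2 : a *+ 2 = - (b *+ 2).
  have : (b - a) *+ 2 = b *+ 2 + b *+ 2 by rewrite -mulrnDr /= b4 mulr2n.
  by rewrite mulrnBl => /addrI /eqP; rewrite eqr_oppLR => /eqP.
(* Therefore u (uv + vu) = kv + uvu = 0, and multiplying by u gives k (uv + vu) = 0. *)
have u_anti : u * (u * v + v * u) = 0.
  apply: four_reg; rewrite mulrDr uuv uvu.
  have -> : (b + a) *+ 4 = (b + a) *+ 2 *+ 2 by rewrite -mulrnA.
  by rewrite (mulrnDl 2 b a) a2 subrr mul0rn.
have anti : u * v + v * u = 0 by apply: k_reg; rewrite -uu -mulrA u_anti mulr0.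
by apply/eqP; rewrite -addr_eq0; apply/eqP.
Qed.

Definition psign (R : pzRingType) (x : int) : R := if (2 %| x)%Z then 1 else -1.

Lemma psignD (R : pzRingType) x y : psign R (x + y) = psign R x * psign R y.
Proof.
rewrite /psign; have -> : (2 %| x + y)%Z = ((2 %| x)%Z == (2 %| y)%Z).
  by case: (boolP (2 %| x)%Z) => Hx; case: (boolP (2 %| y)%Z) => Hy;
    apply/idP/idP => //=; lia.
case: (2 %| x)%Z; case: (2 %| y)%Z;
  by rewrite /= ?mulrNN ?mulr1 ?mul1r.
Qed.
Lemma psignN (R : pzRingType) x : psign R (- x) = psign R x.
Proof. by rewrite /psign; have -> : (2 %| - x)%Z = (2 %| x)%Z by apply/idP/idP; lia. Qed.

Section SpinRepresentation.
Variables (F : fieldType) (m : nat) (A : 'M[int]_m) (G : lmodType F).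
Variables (br : G -> G -> G) (e f h : 'I_m -> G) (omega : G -> G).
Variables (L : fieldExtType F) (s : nat) (rho : G -> 'M[L]_s).
Hypothesis slA : simply_laced A.
Hypothesis lieG : is_lie br.
Hypothesis serreG : serre_rel A br e f h.
Hypothesis om_hom : is_lie_hom br br omega.
Hypothesis om_gen : forall i,
  [/\ omega (e i) = - f i, omega (f i) = - e i & omega (h i) = - h i].
Hypothesis om_invol : forall x, omega (omega x) = x.
Hypothesis rho_lin : forall (c : F) x y, omega x = x -> omega y = y ->
  rho (c *: x + y) = c%:A *: rho x + rho y.
Hypothesis rho_br : forall x y, omega x = x -> omega y = y ->
  rho (br x y) = rho x *m rho y - rho y *m rho x.
Hypothesis rho_spin : forall i,
  rho (e i - f i) *m rho (e i - f i) = (- (4%:R)^-1) %:M.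
Hypothesis four_nz : (4%:R : L) != 0.

Definition in_k x := omega x = x.

Lemma in_k0 : in_k 0. Proof. exact: hom0 om_hom. Qed.
Lemma in_kD x y : in_k x -> in_k y -> in_k (x + y).
Proof. by rewrite /in_k (homD om_hom) => -> ->. Qed.
Lemma in_kZ c x : in_k x -> in_k (c *: x).
Proof. by rewrite /in_k (homZ om_hom) => ->. Qed.
Lemma in_k_br x y : in_k x -> in_k y -> in_k (br x y).
Proof. by rewrite /in_k (hom_br om_hom) => -> ->. Qed.
Lemma in_k_sym x : in_k (x + omega x).
Proof. by rewrite /in_k (homD om_hom) om_invol addrC. Qed.

Lemma rho0 : rho 0 = 0.
Proof.
have := rho_lin (-1) in_k0 in_k0.
rewrite scaler0 addr0 scaleNr scale1r scaleN1r => /eqP.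
by rewrite addrC subrr eq_sym => /eqP.
Qed.
Lemma rhoD x y : in_k x -> in_k y -> rho (x + y) = rho x + rho y.
Proof. by move=> kx ky; have := rho_lin 1 kx ky; rewrite !scale1r. Qed.
Lemma rhoZ c x : in_k x -> rho (c *: x) = c%:A *: rho x.
Proof. by move=> kx; have := rho_lin c kx in_k0; rewrite !addr0 rho0 addr0. Qed.
Lemma rhoN x : in_k x -> rho (- x) = - rho x.
Proof. by move=> kx; rewrite -scaleN1r rhoZ // scaleNr scale1r scaleN1r. Qed.

Lemma rho_ideal (S : G -> Prop) :
  (forall z, S z -> in_k z /\ rho z = 0) ->
  forall x, in_k_ideal br omega S x -> in_k x /\ rho x = 0.
Proof.
move=> rhoS x.
elim=> {x} [z /rhoS //||x y _ [kx rx] _ [ky ry]|c x _ [kx rx]|y x ky _ [kx rx]].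
- by split; [apply: in_k0 | apply: rho0].
- by split; [apply: in_kD | rewrite rhoD // rx ry addr0].
- by split; [apply: in_kZ | rewrite rhoZ // rx scaler0].
- by split; [apply: in_k_br | rewrite rho_br // rx mulmx0 mul0mx subrr].
Qed.

Definition Xk i := e i - f i.
Definition gam i := rho (Xk i).

Lemma in_k_X i : in_k (Xk i).
Proof.
by rewrite /in_k /Xk (homB om_hom); have [-> -> _] := om_gen i; rewrite opprK addrC.
Qed.

Lemma br_X_orth i j : i != j -> A i j = 0 -> br (Xk i) (Xk j) = 0.
Proof.
move=> nij Aij; have [_ _ _ _ [se sf]] := serreG.
have ee : br (e i) (e j) = 0 by move: (se i j nij); rewrite Aij; apply.
have ff : br (f i) (f j) = 0 by move: (sf i j nij); rewrite Aij; apply.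
rewrite /Xk (brBl lieG) !(brBr lieG) ee ff (br_ef serreG) (negPf nij).
by rewrite (brC lieG (f i)) (br_ef serreG) eq_sym (negPf nij) !oppr0 !subrr.
Qed.

Lemma br_X_adj i j : i != j -> A i j = -1 -> br (Xk i) (br (Xk i) (Xk j)) = - Xk j.
Proof.
move=> nij Aij; have [_ _ _ _ [se sf]] := serreG.
have nji : (j == i) = false by rewrite eq_sym (negPf nij).
have eee : br (e i) (br (e i) (e j)) = 0 by move: (se i j nij); rewrite Aij; apply.
have fff : br (f i) (br (f i) (f j)) = 0 by move: (sf i j nij); rewrite Aij; apply.
have -> : br (Xk i) (Xk j) = br (e i) (e j) + br (f i) (f j).
  rewrite /Xk (brBl lieG) !(brBr lieG) (br_ef serreG) (negPf nij).
  by rewrite (brC lieG (f i)) (br_ef serreG) nji !oppr0 !addr0 sub0r opprK.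
rewrite /Xk (brBl lieG) !(brDr lieG) eee fff.
rewrite (jacobi lieG (e i)) (br_ef serreG) eqxx (br_hf serreG) Aij.
rewrite (br_ef serreG) (negPf nij) (br0r lieG).
rewrite (jacobi lieG (f i)) (brC lieG (f i) (e i)) (br_ef serreG) eqxx (brNl lieG).
rewrite (br_he serreG) Aij (brC lieG (f i) (e j)) (br_ef serreG) nji oppr0 (br0r lieG).
by rewrite rmorphN1 !scaleN1r !addr0 !add0r !opprK opprB addrC.
Qed.

Lemma gam_comm i j : i != j -> A i j = 0 -> gam i *m gam j = gam j *m gam i.
Proof.
move=> nij Aij; have := rho_br (in_k_X i) (in_k_X j).
by rewrite br_X_orth // rho0 => /eqP; rewrite eq_sym subr_eq0 => /eqP.
Qed.

Lemma gam_anti i j : i != j -> A i j = -1 -> gam i *m gam j = - (gam j *m gam i).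
Proof.
move=> nij Aij.
have kXX := in_k_br (in_k_X i) (in_k_X j).
have := rho_br (in_k_X i) kXX; rewrite br_X_adj // (rhoN (in_k_X j)).
rewrite (rho_br (in_k_X i) (in_k_X j)) => /esym adj.
have sq := rho_spin i; rewrite !mulmxE in adj sq *.
apply: (@anticommute_of_spin _ _ _ (- (4%:R)^-1)%:M) => //.
- by move=> y; rewrite -!mulmxE scalar_mxC.
- rewrite -scalemx1 scalerMnl mulNrn -(mulr_natr ((4%:R : L)^-1) 4) mulVf //.
  by rewrite scaleN1r idmxE.
Qed.

Lemma gam_sign j i : gam j *m gam i = psign L (A j i) *: (gam i *m gam j).
Proof.
have [->|nji] := eqVneq j i; first by rewrite diag_cartan // /psign /= scale1r.
have [_] := slA j i; rewrite (negPf nji) => -[] Aji; rewrite Aji /psign /=.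
- by rewrite scale1r; apply: gam_comm.
- by rewrite scaleN1r; apply: gam_anti.
Qed.

(* The invariant carried by rho(x + omega x) for x in n^+_alpha: it commutes or
   anticommutes with each gam_j according to the parity of (v_j, alpha), and it
   vanishes as soon as 4 divides (alpha, alpha). *)
Definition spin_law a (M : 'M[L]_s) :=
  ((4 %| qnorm A a)%Z -> M = 0) /\
  forall j, gam j *m M = psign L (cform A (sr j) a) *: (M *m gam j).

Lemma spin_law0 a : spin_law a 0.
Proof. by split=> // j; rewrite mulmx0 mul0mx scaler0. Qed.
Lemma spin_lawD a M N : spin_law a M -> spin_law a N -> spin_law a (M + N).
Proof.
move=> [M0 Msign] [N0 Nsign]; split; first by move=> q4; rewrite M0 // N0 // addr0.
by move=> j; rewrite mulmxDr mulmxDl Msign Nsign scalerDr.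
Qed.
Lemma spin_lawZ a c M : spin_law a M -> spin_law a (c *: M).
Proof.
move=> [M0 Msign]; split; first by move=> q4; rewrite M0 // scaler0.
by move=> j; rewrite -scalemxAr Msign -scalemxAl !scalerA mulrC.
Qed.

(* The inductive step, mirroring [e_i, x] ~ [X_i, x] + [f_i, x]: the degree
   v_i + b case follows from the degree b and b - v_i cases.  Vanishing uses
   (v_i + b, v_i + b) = (b - v_i, b - v_i) + 4 (v_i, b) = (b, b) + 2 (v_i, b) + 2:
   either (v_i, b) is even and M1 commutes with gam_i, or 4 divides (b, b). *)
Lemma spin_law_step i b M1 M2 : spin_law b M1 -> spin_law (b - sr i) M2 ->
  spin_law (sr i + b) (gam i *m M1 - M1 *m gam i + M2).
Proof.
move=> [M1_0 M1_sign] [M2_0 M2_sign]; split.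
- rewrite qnorm_add_sr // => q4.
  have -> : M2 = 0 by apply: M2_0; rewrite qnorm_sub_sr //; lia.
  rewrite addr0; have [even | odd] := boolP (2 %| cform A (sr i) b)%Z.
  + by rewrite M1_sign /psign even scale1r subrr.
  + by rewrite M1_0 ?mulmx0 ?mul0mx ?subrr //; lia.
- move=> j; set c := psign L (A j i) * psign L (cform A (sr j) b).
  have -> : psign L (cform A (sr j) (sr i + b)) = c by rewrite cformDr cform_sr psignD.
  have sign_M2 : psign L (cform A (sr j) (b - sr i)) = c.
    by rewrite cformDr cformNr cform_sr psignD psignN mulrC.
  have comm_giM1 : gam j *m (gam i *m M1) = c *: (gam i *m M1 *m gam j).
    by rewrite mulmxA gam_sign -scalemxAl -mulmxA M1_sign -scalemxAr scalerA mulmxA.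
  have comm_M1gi : gam j *m (M1 *m gam i) = c *: (M1 *m gam i *m gam j).
    rewrite mulmxA M1_sign -scalemxAl -mulmxA gam_sign -scalemxAr.
    by rewrite scalerA mulrC mulmxA.
  have comm_M2 : gam j *m M2 = c *: (M2 *m gam j) by rewrite M2_sign sign_M2.
  rewrite mulmxDr mulmxBr comm_giM1 comm_M1gi comm_M2.
  by rewrite !mulmxDl mulNmx scalerDr scalerBr.
Qed.

Lemma spin_law_gen i : spin_law (sr i) (rho (e i + omega (e i))).
Proof.
have [-> _ _] := om_gen i; split; first by rewrite qnorm_sr.
by move=> j; rewrite cform_sr gam_sign.
Qed.

(* omega = -id on the Cartan subalgebra, so h contributes nothing to k. *)
Lemma cartan_omega z : cartan h z -> omega z = - z.
Proof.
elim=> [i||x y _ IHx _ IHy|c x _ IHx].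
- by have [_ _ ->] := om_gen i.
- by rewrite (hom0 om_hom) oppr0.
- by rewrite (homD om_hom) IHx IHy opprD.
- by rewrite (homZ om_hom) IHx scalerN.
Qed.
Lemma cartan_part_k a z : cartan_part h a z -> z + omega z = 0.
Proof.
by case=> [[_ Hz]|->]; [rewrite cartan_omega // subrr | rewrite (hom0 om_hom) addr0].
Qed.

Lemma k_part_br_e i x : br (e i) x + omega (br (e i) x) =
  br (Xk i) (x + omega x) + (br (f i) x + omega (br (f i) x)).
Proof.
have [om_e om_f _] := om_gen i.
rewrite !(hom_br om_hom) om_e om_f !(brNl lieG) /Xk (brBl lieG) !(brDr lieG).
set p := br (e i) x; set q := br (e i) (omega x).
set r := br (f i) x; set t := br (f i) (omega x).
by rewrite opprD !addrA (addrAC _ (- t) r) subrK (addrAC _ (- t) (- q)) addrK.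
Qed.

Lemma nplus_height a x : nplus br e a x -> x = 0 \/ 0 < height a.
Proof.
elim=> {a x} [i|i a x _ IHx|a|a x y _ IHx _ IHy|a c x _ IHx].
- by right; rewrite height_sr.
- case: IHx => [->|ht_a]; first by left; rewrite (br0r lieG).
  by right; rewrite heightD height_sr; lia.
- by left.
- by case: IHx IHy => [-> [->|]|]; [left; rewrite addr0 | right | right].
- by case: IHx => [->|]; [left; rewrite scaler0 | right].
Qed.

Lemma spin_law_nplus_height n a x :
  nplus br e a x -> height a <= n%:Z -> spin_law a (rho (x + omega x)).
Proof.
have spin_law_zero b : spin_law b (rho (0 + omega 0)).
  by rewrite (hom0 om_hom) addr0 rho0; apply: spin_law0.
elim: n a x => [|n IHn] a x Hx.
  by have [->|] := nplus_height Hx; [move=> _; apply: spin_law_zero | lia].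
elim: Hx => {a x} [i|i b x Hx _|a|a x y _ IHx _ IHy|a c x _ IHx] ht.
- exact: spin_law_gen.
- rewrite heightD height_sr in ht; rewrite k_part_br_e.
  have [z1 [z2 [-> Hz1 Hz2]]] := br_f_nplus lieG serreG i Hx.
  rewrite (homD om_hom) addrACA (cartan_part_k Hz2) addr0.
  rewrite (rhoD (in_k_br (in_k_X i) (in_k_sym x)) (in_k_sym z1)).
  rewrite (rho_br (in_k_X i) (in_k_sym x)).
  apply: spin_law_step; apply: IHn => //; rewrite ?heightD ?heightN ?height_sr; lia.
- exact: spin_law_zero.
- rewrite (homD om_hom) addrACA (rhoD (in_k_sym x) (in_k_sym y)).
  by apply: spin_lawD; [apply: IHx | apply: IHy].
- by rewrite (homZ om_hom) -scalerDr (rhoZ _ (in_k_sym x)); apply/spin_lawZ/IHx.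
Qed.

Lemma spin_law_nplus a x : nplus br e a x -> spin_law a (rho (x + omega x)).
Proof.
move=> Hx; apply: (@spin_law_nplus_height `|height a|%N) => //; lia.
Qed.

Lemma omega_nplus_f c y : nplus br f c y -> nplus br e c (omega y).
Proof.
elim=> {c y} [i|i c y _ IHy|c|c x y _ IHx _ IHy|c k y _ IHy].
- by have [_ -> _] := om_gen i; apply/nplusN/nplus_gen.
- rewrite (hom_br om_hom); have [_ -> _] := om_gen i.
  by rewrite (brNl lieG); apply/nplusN/nplus_br.
- by rewrite (hom0 om_hom); apply: nplus0.
- by rewrite (homD om_hom); apply: nplusD.
- by rewrite (homZ om_hom); apply: nplusZ.
Qed.

Lemma rho_k_root a y : homogeneous br e f h a y -> (4 %| qnorm A a)%Z ->
  rho (y + omega y) = 0.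
Proof.
move=> Hy q4.
have [y1 [y2 [y3 [-> Hy1 Hy2 Hy3]]]] := homogeneous_triangular lieG serreG Hy.
rewrite !(homD om_hom) addrACA (addrACA y1) (cartan_part_k Hy3) addr0.
rewrite (rhoD (in_k_sym y1) (in_k_sym y2)) ((spin_law_nplus Hy1).1 q4) add0r.
(* The n^- part: y2 + omega y2 is the k-part of omega y2 in n^+_(-alpha). *)
rewrite -{1}[y2]om_invol addrC.
by apply: (spin_law_nplus (omega_nplus_f Hy2)).1; rewrite qnormN.
Qed.
End SpinRepresentation.

Lemma natr_neq0_char0 (F : fieldType) (L : fieldExtType F) (n : nat) :
  [pchar F] =i pred0 -> (0 < n)%N -> (n%:R : L) != 0.
Proof.
move=> charF0 n_gt0; rewrite -(rmorph_nat (in_alg L)) fmorph_eq0.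
by rewrite ((pcharf0P F).1 charF0 n) -lt0n.
Qed.

Unset Implicit Arguments. Set Strict Implicit.

Theorem mainTheorem13
  (F : fieldType) (charF0 : [pchar F] =i pred0)
  (m : nat) (A : 'M[int]_m)
  (hSL : simply_laced A) (hAff : affine_type A)
  (G : lmodType F) (br : G -> G -> G) (e f h : 'I_m -> G)
  (hKM : is_KM_algebra A br e f h)
  (omega : G -> G)
  (hom_omega : is_lie_hom br br omega)
  (omega_gen : forall i, [/\ omega (e i) = - f i, omega (f i) = - e i
                           & omega (h i) = - h i])
  (a : 'I_m -> nat) (ha : null_root_marks A a)
  (L : fieldExtType F) (I : L) (hI : I * I = -1)
  (hL : (<<1%VS; I>>)%VS = fullv)
  (s : nat) (rho : G -> 'M[L]_s)
  (rho_lin : forall (c : F) x y, omega x = x -> omega y = y ->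
               rho (c *: x + y) = c%:A *: rho x + rho y)
  (rho_br : forall x y, omega x = x -> omega y = y ->
               rho (br x y) = rho x *m rho y - rho y *m rho x)
  (rho_spin : forall i, rho (e i - f i) *m rho (e i - f i)
                        = (- (4%:R)^-1) %:M) :
  forall x,
    in_k_ideal br omega
      (fun z => exists y, homogeneous br e f h (null_root a) y /\ z = y + omega y) x ->
    rho x = 0.
Proof.
have [lieG serreG _] := hKM.
have om_invol := chevalley_involutive hKM hom_omega omega_gen.
have four_nz : (4%:R : L) != 0 by apply: natr_neq0_char0.
have delta_isotropic : (4 %| qnorm A (null_root a))%Z.
  by have [null _] := ha; rewrite qnorm_null // dvdz0.
move=> x Hx; suff [_ //] : in_k omega x /\ rho x = 0.
apply: (rho_ideal hom_omega rho_lin rho_br _ Hx) => _ [y [Hy ->]].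
split; first exact: (in_k_sym hom_omega om_invol).
exact: (rho_k_root hSL lieG serreG hom_omega omega_gen om_invol rho_lin rho_br
  rho_spin four_nz Hy).
Qed.
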